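(* Let $r\geq3$ and $n>k_1\geq\cdots\geq k_r\geq t+2$. Let $\mathcal{F}_1\subseteq\Pi(n,k_1),\ldots,\mathcal{F}_r\subseteq\Pi(n,k_r)$ be nonempty, non-trivial and $r$-cross $t$-intersecting, with $s_i=t$ for all $i\in[r]$. Then: (i) for each $j\in[r]$, every $t$-cover of $\mathcal{G}_j$ is a $(t+1)$-cover of all but at most one of the families $\mathcal{F}_i$, $i\in[r]\setminus\{j\}$; (ii) $\tau_t(\mathcal{F}_i)=t$ and $\tau_t(\mathcal{G}_i)\geq t+2$ for all $i\in[r]$.
   Context: $[n]=\{1,\ldots,n\}$. A partition is a set of pairwise disjoint nonempty sets (blocks); $|P|$ is its number of blocks, $F\cap G$ the set of common blocks. $\Pi(n,k)$ is the set of partitions of $[n]$ into $k$ blocks. Families $\mathcal{F}_i\subseteq\Pi(n,k_i)$ are $r$-cross $t$-intersecting if $|F_1\cap\cdots\cap F_r|\geq t$ for all $F_i\in\mathcal{F}_i$; non-trivial if fewer than $t$ blocks belong to every member of every $\mathcal{F}_i$. $\mathcal{G}_i:=\{\bigcap_{j\neq i}F_j:F_j\in\mathcal{F}_j,\ j\neq i\}$ and $s_i:=\min\{|G|:G\in\mathcal{G}_i\}$. An $s$-cover of a family of partitions is a partition (not necessarily of $[n]$) sharing at least $s$ blocks with every member; $\tau_t$ is the minimal number of blocks of a $t$-cover. *)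

From mathcomp Require Import all_boot.
Set Implicit Arguments. Unset Strict Implicit. Unset Printing Implicit Defensive.

(* Ground set [n] is represented by 'I_n; a block is a {set 'I_n};
   a partition is a {set {set 'I_n}}. *)

Definition is_partition (n : nat) (P : {set {set 'I_n}}) : Prop :=
  set0 \notin P /\ trivIset P.

Definition in_Pi (n k : nat) (P : {set {set 'I_n}}) : Prop :=
  is_partition P /\ cover P = [set: 'I_n] /\ #|P| = k.

Definition cross_intersecting (n r t : nat) (F : 'I_r -> {set {set {set 'I_n}}}) : Prop :=
  forall f : 'I_r -> {set {set 'I_n}}, (forall i, f i \in F i) ->
    t <= #|\bigcap_(i < r) f i|.

Definition nontrivial (n r t : nat) (F : 'I_r -> {set {set {set 'I_n}}}) : Prop :=
  #|\bigcap_(i < r) \bigcap_(P in F i) P| < t.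

Definition GG (n r : nat) (F : 'I_r -> {set {set {set 'I_n}}}) (i : 'I_r)
  : {set {set {set 'I_n}}} :=
  [set G | [exists f : {ffun 'I_r -> {set {set 'I_n}}},
     [forall j, (j != i) ==> (f j \in F j)] &&
     (G == \bigcap_(j < r | j != i) f j)]].

Definition is_minimum (Q : nat -> Prop) (m : nat) : Prop :=
  Q m /\ forall k, Q k -> m <= k.

Definition s_eq (n r : nat) (F : 'I_r -> {set {set {set 'I_n}}}) (i : 'I_r) (m : nat) : Prop :=
  is_minimum (fun x => exists2 G, G \in GG F i & #|G| = x) m.

Definition is_cover (n s : nat) (A : {set {set {set 'I_n}}}) (C : {set {set 'I_n}}) : Prop :=
  is_partition C /\ forall P, P \in A -> s <= #|C :&: P|.

Definition tau_eq (n t : nat) (A : {set {set {set 'I_n}}}) (m : nat) : Prop :=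
  is_minimum (fun x => exists2 C, is_cover t A C & #|C| = x) m.

(* tau_t(A) >= m  (with tau = infinity if no t-cover exists). *)
Definition tau_ge (n t : nat) (A : {set {set {set 'I_n}}}) (m : nat) : Prop :=
  forall C, is_cover t A C -> m <= #|C|.

From mathcomp Require Import all_boot.

Set Implicit Arguments.
Unset Strict Implicit.

(* Let T be a member of G_j of minimal size t; by cross
   intersection T lies inside every member of F_j.  If a t-cover C of G_j
   meets a member A of F_i1 and a member B of F_i2 (i1 <> i2) in at most t
   blocks each, then every choice of members avoiding index j that contains
   A or B meets C exactly in C :&: A = C :&: B, and swapping the remaining
   members shows that these t blocks lie in every member of every F_l, l <> j;
   with T they lie in every member of F_j too, contradicting non-triviality.
   For (ii), T itself is a t-cover of F_j, while a t-cover C of G_j with at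
   most t+1 blocks contains T and, by (i), lies inside every member of all
   but one F_l; rebuilding the kernel of that exceptional family from the
   others again puts T inside all members of all families. *)

Lemma card_setI_geq_subset (T : finType) (A B : {set T}) :
  #|A| <= #|A :&: B| -> A \subset B.
Proof. by move=> leAI; apply/setIidPl/eqP; rewrite eqEcard subsetIl. Qed.

Lemma is_partition_subset (n : nat) (P Q : {set {set 'I_n}}) :
  is_partition P -> Q \subset P -> is_partition Q.
Proof.
move=> [P0 trivP] sQP; split; last exact: trivIsetS sQP trivP.
by apply: contra P0; apply: subsetP.
Qed.

Lemma cover_card_geq (n s : nat) (X : {set {set {set 'I_n}}}) C :
  X != set0 -> is_cover s X C -> s <= #|C|.
Proof.
case/set0Pn=> P XP [_ coverC].
exact: leq_trans (coverC P XP) (subset_leq_card (subsetIl _ _)).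
Qed.

Lemma not_cover_succ (n s : nat) (X Y : {set {set {set 'I_n}}}) C :
  is_cover s Y C -> ~ is_cover s.+1 X C ->
  exists2 A, A \in X & #|C :&: A| <= s.
Proof.
move=> [partC _] notC; case: (boolP [exists A in X, #|C :&: A| <= s]).
  by case/exists_inP=> A XA CA; exists A.
rewrite negb_exists_in => /forall_inP bigC; case: notC; split=> // A XA.
by rewrite ltnNge bigC.
Qed.

Section CrossIntersectingFamilies.

Variables (n r t : nat) (F : 'I_r -> {set {set {set 'I_n}}}).

Definition selection (j : 'I_r) (h : 'I_r -> {set {set 'I_n}}) :=
  forall l, l != j -> h l \in F l.

Definition meet_off (j : 'I_r) (h : 'I_r -> {set {set 'I_n}}) :=
  \bigcap_(l < r | l != j) h l.

Definition upd (h : 'I_r -> {set {set 'I_n}}) l P : 'I_r -> {set {set 'I_n}} :=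
  fun m => if m == l then P else h m.

Lemma selection_upd j h l P :
  selection j h -> P \in F l -> selection j (upd h l P).
Proof. by move=> selh FP m mj; rewrite /upd; case: eqP => [->|_] //; apply: selh. Qed.

Lemma meet_off_sub j h l : l != j -> meet_off j h \subset h l.
Proof. by move=> lj; apply: bigcap_inf. Qed.

Lemma GGP j G :
  G \in GG F j <-> exists2 h, selection j h & G = meet_off j h.
Proof.
rewrite inE; split.
  case/existsP=> f /andP[/forallP selF /eqP ->].
  by exists f => // l lj; have := selF l; rewrite lj.
case=> h selh ->; apply/existsP; exists [ffun l => h l]; apply/andP; split.
  by apply/forallP=> l; apply/implyP=> lj; rewrite ffunE; apply: selh.
by apply/eqP; apply: eq_bigr => l _; rewrite ffunE.
Qed.

Lemma mem_GG j h : selection j h -> meet_off j h \in GG F j.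
Proof. by move=> selh; apply/GGP; exists h. Qed.

Lemma exists_total_selection :
  (forall i, F i != set0) -> exists h, forall l, h l \in F l.
Proof.
move=> F0; exists (fun l => odflt set0 [pick P in F l]) => l.
by case: pickP => [//|noP]; case/set0Pn: (F0 l) => P FP; rewrite noP in FP.
Qed.

Lemma common_blocks_lt (D : {set {set 'I_n}}) :
  nontrivial t F -> (forall l P, P \in F l -> D \subset P) -> #|D| < t.
Proof.
move=> ntF subD; apply: leq_ltn_trans ntF; apply: subset_leq_card.
by apply/bigcapsP=> l _; apply/bigcapsP=> P; apply: subD.
Qed.

Hypothesis crossF : cross_intersecting t F.

Lemma cross_meet_off j h P :
  selection j h -> P \in F j -> t <= #|P :&: meet_off j h|.
Proof.
move=> selh FP; have := @crossF (upd h j P).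
have updj : upd h j P j = P by rewrite /upd eqxx.
rewrite (bigD1 j) //= updj (eq_bigr h) => [|l /negbTE lj]; last by rewrite /upd lj.
apply=> l; rewrite /upd; case: eqP => [-> //|/eqP]; exact: selh.
Qed.

Lemma exists_kernel j : s_eq F j t ->
  exists2 h, selection j h &
    #|meet_off j h| = t /\ forall P, P \in F j -> meet_off j h \subset P.
Proof.
move=> [[G /GGP[h selh ->] cardG] _]; exists h => //; split=> // P FP.
by apply: card_setI_geq_subset; rewrite cardG setIC cross_meet_off.
Qed.

Section CoverOfGG.

Variables (j : 'I_r) (C : {set {set 'I_n}}).
Hypothesis coverC : is_cover t (GG F j) C.

Lemma setI_cover_meet_off h i :
  selection j h -> i != j -> #|C :&: h i| <= t ->
  C :&: meet_off j h = C :&: h i.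
Proof.
move=> selh ij small; apply/eqP; rewrite eqEcard setIS ?meet_off_sub //=.
exact: leq_trans small (proj2 coverC _ (mem_GG selh)).
Qed.

Lemma card_setI_deficient h i A :
  selection j h -> i != j -> A \in F i -> #|C :&: A| <= t -> #|C :&: A| = t.
Proof.
move=> selh ij FA CA; apply/eqP; rewrite eqn_leq CA /=.
have selA := selection_upd selh FA.
have hiA : upd h i A i = A by rewrite /upd eqxx.
rewrite -{1}hiA -(setI_cover_meet_off (i := i) selA) ?hiA //.
exact: (proj2 coverC) (mem_GG selA).
Qed.

Section TwoDeficientFamilies.

Variables (i1 i2 : 'I_r) (A B : {set {set 'I_n}}).
Hypotheses (i1j : i1 != j) (i2j : i2 != j) (i12 : i1 != i2).
Hypotheses (FA : A \in F i1) (FB : B \in F i2).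
Hypotheses (CA : #|C :&: A| <= t) (CB : #|C :&: B| <= t).

Variable h : 'I_r -> {set {set 'I_n}}.
Hypothesis selh : selection j h.

Let h0 := upd (upd h i1 A) i2 B.

Let selh0 : selection j h0.
Proof. by apply: selection_upd => //; apply: selection_upd. Qed.

Let h0_i1 : h0 i1 = A.
Proof. by rewrite /h0 /upd eqxx (negbTE i12). Qed.

Let h0_i2 : h0 i2 = B.
Proof. by rewrite /h0 /upd eqxx. Qed.

Let trace_h0_i1 : C :&: meet_off j h0 = C :&: A.
Proof. by rewrite -h0_i1 (setI_cover_meet_off (i := i1)) // h0_i1. Qed.

Let trace_h0_i2 : C :&: meet_off j h0 = C :&: B.
Proof. by rewrite -h0_i2 (setI_cover_meet_off (i := i2)) // h0_i2. Qed.

(* Replacing the l-th member keeps A (if l <> i1) or B (if l = i1) in the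
   selection, so its trace on C stays C :&: A = C :&: B. *)
Lemma setI_deficient_sub l P : l != j -> P \in F l -> C :&: A \subset P.
Proof.
move=> lj FP; have sel' := selection_upd selh0 FP.
have [i [ij il CiA]] :
    exists i, [/\ i != j, i != l & C :&: upd h0 l P i = C :&: A].
  have [->|li1] := eqVneq l i1.
    have i21 : i2 != i1 by rewrite eq_sym.
    by exists i2; rewrite /upd (negbTE i21) h0_i2 -trace_h0_i2 trace_h0_i1.
  have i1l : i1 != l by rewrite eq_sym.
  by exists i1; rewrite /upd (negbTE i1l) h0_i1.
have -> : C :&: A = C :&: meet_off j (upd h0 l P).
  by rewrite -CiA (setI_cover_meet_off (i := i)) // CiA.
by rewrite subIset // orbC (subset_trans (meet_off_sub _ lj)) // /upd eqxx.
Qed.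

End TwoDeficientFamilies.

Lemma deficient_families_eq i1 i2 A B :
  (forall i, F i != set0) -> nontrivial t F -> s_eq F j t ->
  i1 != j -> i2 != j -> A \in F i1 -> B \in F i2 ->
  #|C :&: A| <= t -> #|C :&: B| <= t -> i1 = i2.
Proof.
move=> F0 ntF sj i1j i2j FA FB CA CB; apply/eqP/negPn/negP => i12.
have [h hF] := exists_total_selection F0.
have selh : selection j h by move=> l _; apply: hF.
have [g selg [_ kerg]] := exists_kernel sj.
have CA_sub := setI_deficient_sub i1j i2j i12 FA FB CA CB selh.
suff : #|C :&: A| < t by rewrite (card_setI_deficient selh i1j FA CA) ltnn.
apply: common_blocks_lt => // l P; have [->|lj] := eqVneq l j; last exact: CA_sub.
move/kerg; apply: subset_trans; apply/bigcapsP=> m mj.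
exact: CA_sub mj (selg m mj).
Qed.

End CoverOfGG.

Lemma tau_eq_family i :
  1 < r -> (forall l P, P \in F l -> is_partition P) -> F i != set0 ->
  s_eq F i t -> tau_eq t (F i) t.
Proof.
move=> r_gt1 partF Fi0 si; have [g selg [cardg kerg]] := exists_kernel si.
split=> [|_ [C coverC <-]]; last exact: cover_card_geq coverC.
exists (meet_off i g) => //; split=> [|P FP]; last by rewrite (setIidPl (kerg P FP)) cardg.
have /set0Pn[l] : [set~ i] != set0.
  by rewrite -card_gt0 cardsC1 card_ord -ltnS (ltn_predK r_gt1).
rewrite in_setC1 => li.
exact: is_partition_subset (partF l _ (selg l li)) (meet_off_sub _ li).
Qed.

Lemma tau_ge_GG i :
  (forall l, F l != set0) -> nontrivial t F -> (forall l, s_eq F l t) ->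
  tau_ge t (GG F i) t.+2.
Proof.
move=> F0 ntF sF C coverC; rewrite leqNgt; apply/negP => smallC.
have [g selg [cardg kerg]] := exists_kernel (sF i).
have TC : meet_off i g \subset C.
  by apply: card_setI_geq_subset; rewrite cardg setIC (proj2 coverC) ?mem_GG.
pose deficient l := [exists A in F l, #|C :&: A| <= t].
have deficient_eq l m : l != i -> m != i -> deficient l -> deficient m -> l = m.
  move=> li mi /exists_inP[A FA CA] /exists_inP[B FB CB].
  exact: (deficient_families_eq coverC F0 ntF (sF i) li mi FA FB CA CB).
have sub_full l P : ~~ deficient l -> P \in F l -> meet_off i g \subset P.
  rewrite negb_exists_in => /forall_inP fullC FP; apply: subset_trans TC _.
  by apply: card_setI_geq_subset; rewrite -ltnS (leq_trans smallC) // ltnS ltnNge fullC.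
suff : #|meet_off i g| < t by rewrite cardg ltnn.
apply: common_blocks_lt => // l P; have [->|li] := eqVneq l i; first exact: kerg.
move=> FP; have [defl|] := boolP (deficient l); last by move/sub_full; apply.
have [g' selg' [_ kerg']] := exists_kernel (sF l).
apply: subset_trans (kerg' P FP); apply/bigcapsP => m ml.
have [->|mi] := eqVneq m i; first by apply: kerg; apply: selg'; rewrite eq_sym.
apply: sub_full (selg' m ml); apply: contra ml => defm.
by rewrite (deficient_eq m l mi li defm defl).
Qed.

End CrossIntersectingFamilies.

Unset Implicit Arguments.

Theorem mainTheorem15 (n r t : nat) (k : 'I_r -> nat)
  (F : 'I_r -> {set {set {set 'I_n}}}) :
  3 <= r ->
  (forall i j : 'I_r, i <= j -> k j <= k i) ->
  (forall i, k i < n) ->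
  (forall i, t.+2 <= k i) ->
  (forall i P, P \in F i -> in_Pi (k i) P) ->
  (forall i, F i != set0) ->
  nontrivial t F ->
  cross_intersecting t F ->
  (forall i, s_eq F i t) ->
  (forall j C, is_cover t (GG F j) C ->
     forall i1 i2, i1 != j -> i2 != j ->
       ~ is_cover t.+1 (F i1) C -> ~ is_cover t.+1 (F i2) C -> i1 = i2)
  /\ (forall i, tau_eq t (F i) t /\ tau_ge t (GG F i) t.+2).
Proof.
move=> r_ge3 _ _ _ PiF F0 ntF crossF sF; split.
  move=> j C coverC i1 i2 i1j i2j /(not_cover_succ coverC)[A FA CA].
  case/(not_cover_succ coverC)=> B FB CB.
  exact: (deficient_families_eq crossF coverC F0 ntF (sF j) i1j i2j FA FB CA CB).
move=> i; split; last exact: tau_ge_GG.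
apply: tau_eq_family => //; first exact: leq_trans r_ge3.
by move=> l P /PiF[].
Qed.
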